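(* Let $V$ be a braided vector space of diagonal type over a field $F$ of characteristic zero with basis $x_1,\dots,x_n$ and braiding $C(x_i\otimes x_j)=p_{i,j}x_j\otimes x_i$, and let $\mathfrak B(V)$ be its Nichols algebra. The following are equivalent: (1) $\mathfrak B(V)=F\oplus\mathfrak L(V)_L$; (2) $\mathfrak B(V)=F\oplus\mathfrak L^-(V)$; (3) $p_{i,i}=-1$ and $p_{i,j}p_{j,i}=1$ for all $1\le i\ne j\le n$, and for every $m\ge2$ and every strictly decreasing sequence of letters $h_1>h_2>\cdots>h_m$ in $\{x_1,\dots,x_n\}$ (with $x_1<\cdots<x_n$) there exists $\tau\in\mathbb S_m$ such that $\prod_{j=1}^{m-1}\bigl(p_{h_{\tau(j)},\,h_{\tau(m)}\cdots h_{\tau(j+1)}}-1\bigr)\neq0$.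
   Context: $\mathfrak B(V)=T(V)/\bigoplus_{m\ge2}\ker S_m$ is $\mathbb Z^n$-graded with $\deg x_i=e_i$; for homogeneous $u,v$ with $\deg u=\sum a_ie_i$, $\deg v=\sum b_je_j$ put $p_{u,v}=\prod p_{i,j}^{a_ib_j}$. $\mathfrak L(V)_L$ is the Lie subalgebra of $\mathfrak B(V)$ generated by $V$ under $[u,v]_L=p_{v,u}uv-p_{u,v}vu$; $\mathfrak L^-(V)$ is the Lie subalgebra generated by $V$ under $[u,v]^-=uv-vu$; $F$ denotes the scalars $F\cdot1$ and equalities are as vector spaces. *)

From HB Require Import structures.
From mathcomp Require Import all_boot all_order all_algebra all_fingroup.
Set Implicit Arguments. Unset Strict Implicit. Unset Printing Implicit Defensive.
Import GRing.Theory.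
Local Open Scope ring_scope.

(* words in the letters x_0, ..., x_{n-1} (the paper's x_1 < ... < x_n) *)
Definition word (n : nat) := seq 'I_n.

(* coefficient functions on words; T(V) is the subspace of finitely
   supported ones (noncommutative polynomials in x_0..x_{n-1}) *)
Definition tens (F : Type) (n : nat) := word n -> F.

Definition tfinsupp (F : fieldType) n (f : tens F n) : Prop :=
  exists s : seq (word n), forall w, w \notin s -> f w = 0.

Definition tadd (F : fieldType) n (f g : tens F n) : tens F n := fun w => f w + g w.
Definition tsub (F : fieldType) n (f g : tens F n) : tens F n := fun w => f w - g w.
Definition tscale (F : fieldType) n (c : F) (f : tens F n) : tens F n := fun w => c * f w.
Definition tmul (F : fieldType) n (f g : tens F n) : tens F n :=
  fun w => \sum_(k < (size w).+1) f (take k w) * g (drop k w).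
Definition tone (F : fieldType) n : tens F n := fun w => (w == [::])%:R.
Definition tgen (F : fieldType) n (i : 'I_n) : tens F n := fun w => (w == [:: i])%:R.

(* braid-lifted action of s in S_m on a word of length m (diagonal braiding
   C(x_i ⊗ x_j) = p i j x_j ⊗ x_i):
   x_{v_1}...x_{v_m} |-> (prod_{a<b, s a > s b} p v_a v_b) x_{v_{s^-1 1}} ... x_{v_{s^-1 m}} *)
Definition perm_word n m (s : 'S_m) (v : m.-tuple 'I_n) : word n :=
  [seq tnth v ((s^-1)%g k) | k <- enum 'I_m].
Definition perm_coef (F : fieldType) n (p : 'I_n -> 'I_n -> F) m (s : 'S_m)
  (v : m.-tuple 'I_n) : F :=
  \prod_(a : 'I_m) \prod_(b : 'I_m | ((a < b) && (s b < s a))%N) p (tnth v a) (tnth v b).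

(* quantum symmetrizer S = ⊕_m S_m, S_m = sum_{s in S_m} (braid lift of s) *)
Definition symmetrizer (F : fieldType) n (p : 'I_n -> 'I_n -> F) (f : tens F n)
  : tens F n :=
  fun w => \sum_(v : (size w).-tuple 'I_n)
             \sum_(s : 'S_(size w) | perm_word s v == w) perm_coef p s v * f v.

(* the defining ideal ⊕_{m>=2} ker S_m of B(V) (S_0, S_1 are identities) *)
Definition nichols_ideal (F : fieldType) n (p : 'I_n -> 'I_n -> F) (f : tens F n)
  : Prop := tfinsupp f /\ forall w, symmetrizer p f w = 0.

(* bracket expressions in the generators *)
Inductive btree (n : nat) : Type :=
| BLeaf of 'I_n
| BNode of btree n & btree n.

Fixpoint tdeg n (t : btree n) : 'I_n -> nat :=
  match t with
  | BLeaf i => fun j => nat_of_bool (i == j)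
  | BNode t1 t2 => fun j => (tdeg t1 j + tdeg t2 j)%N
  end.

Definition pdeg (F : fieldType) n (p : 'I_n -> 'I_n -> F) (a b : 'I_n -> nat) : F :=
  \prod_(i : 'I_n) \prod_(j : 'I_n) p i j ^+ (a i * b j).

(* iterated [u,v]_L = p_{v,u} uv - p_{u,v} vu (computed in T(V), then projected) *)
Fixpoint evalL (F : fieldType) n (p : 'I_n -> 'I_n -> F) (t : btree n) : tens F n :=
  match t with
  | BLeaf i => tgen F i
  | BNode t1 t2 =>
      tsub (tscale (pdeg p (tdeg t2) (tdeg t1)) (tmul (evalL p t1) (evalL p t2)))
           (tscale (pdeg p (tdeg t1) (tdeg t2)) (tmul (evalL p t2) (evalL p t1)))
  end.

Fixpoint evalMinus (F : fieldType) n (t : btree n) : tens F n :=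
  match t with
  | BLeaf i => tgen F i
  | BNode t1 t2 => tsub (tmul (evalMinus F t1) (evalMinus F t2)) (tmul (evalMinus F t2) (evalMinus F t1))
  end.

Definition tspan (F : fieldType) n (E : btree n -> tens F n) (f : tens F n) : Prop :=
  exists k (ts : 'I_k -> btree n) (cs : 'I_k -> F),
    forall w, f w = \sum_(i < k) cs i * E (ts i) w.

(* B(V) = F·1 ⊕ π(span E) as vector spaces, where π : T(V) -> B(V) is the
   projection; expressed through the ideal: every element of T(V) is congruent
   mod the ideal to c·1 + g with g in span E, and F·1 ∩ π(span E) = 0. *)
Definition B_eq_F_oplus (F : fieldType) n (p : 'I_n -> 'I_n -> F)
  (E : btree n -> tens F n) : Prop :=
  (forall f, tfinsupp f -> exists c g,
      tspan E g /\ nichols_ideal p (tsub f (tadd (tscale c (@tone F n)) g))) /\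
  (forall c g, tspan E g -> nichols_ideal p (tsub (tscale c (@tone F n)) g) -> c = 0).

Definition cond3 (F : fieldType) n (p : 'I_n -> 'I_n -> F) : Prop :=
  [/\ (forall i, p i i = -1),
      (forall i j, i != j -> p i j * p j i = 1) &
      (forall m (h : 'I_m -> 'I_n), (2 <= m)%N ->
         (forall a b : 'I_m, (a < b)%N -> (h b < h a)%N) ->
         exists tau : 'S_m,
           \prod_(j : 'I_m | (j.+1 < m)%N)
              (\prod_(k : 'I_m | (j < k)%N) p (h (tau j)) (h (tau k)) - 1) != 0)].

From HB Require Import structures.
From mathcomp Require Import all_boot all_order all_algebra all_fingroup.
From mathcomp Require Import ring zify.
Import GRing.Theory.
Local Open Scope ring_scope.
Set Implicit Arguments. Unset Strict Implicit. Unset Printing Implicit Defensive.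

(* Once [p i i = -1] and [p i j * p j i = 1], an element of T(V) lies in the
   defining ideal of B(V) iff it is killed by the functionals [psi u], [u] a word
   without repeated letters: on such words the symmetrizer is [psi u] up to a
   unit, and at a word with a repeated letter it vanishes because swapping two
   equal letters is a sign-reversing involution on the permutations.  As [psi]
   is multiplicative under concatenation, [psi] of an iterated bracket is, up to
   sign, the product over its nodes of the coefficients [bracket_coef] (for both
   brackets), so B(V) = F + span of brackets iff every word with distinct
   letters is a rearrangement of the leaves of a bracket with all these
   coefficients nonzero.  The Jacobi identity for the coefficients lets one take
   this bracket right-normed, which is the condition on [tau] in (3); the
   conditions on [p i i] and [p i j * p j i] are forced by words of length two. *)

Section BigOps.
Variable R : comPzSemiRingType.

Lemma prod_count_mem (T : finType) (g : T -> R) (s : seq T) :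
  \prod_(i : T) g i ^+ count_mem i s = \prod_(y <- s) g y.
Proof.
elim: s => [|x s IH]; first by rewrite big_nil big1 // => i _; rewrite expr0.
rewrite big_cons -IH /=; under eq_bigr do rewrite exprD; rewrite big_split /=.
congr (_ * _); rewrite (bigD1 x) //= eqxx expr1 big1 ?mulr1 // => i ne.
by rewrite eq_sym (negPf ne) expr0.
Qed.

Lemma prod_ord_pairs m (H : 'I_m -> 'I_m -> R) :
  \prod_(a : 'I_m) \prod_(b : 'I_m) H a b =
  (\prod_(a : 'I_m) \prod_(b : 'I_m | (a < b)%N) (H a b * H b a)) * \prod_(a : 'I_m) H a a.
Proof.
have split_row (a : 'I_m) : \prod_(b : 'I_m) H a b =
    (\prod_(b : 'I_m | (a < b)%N) H a b) * (\prod_(b : 'I_m | (b < a)%N) H a b) * H a a.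
  rewrite (bigID (fun b : 'I_m => (a < b)%N)) /= -mulrA; congr (_ * _).
  rewrite (bigID (fun b : 'I_m => (b < a)%N)) /=; congr (_ * _).
    by apply: eq_bigl => b; case: ltngtP.
  by rewrite (big_pred1 a) // => b; rewrite /= -val_eqE /=; case: ltngtP.
under eq_bigr do rewrite split_row.
rewrite big_split /=; congr (_ * _).
under [RHS]eq_bigr do rewrite big_split /=.
rewrite !big_split /=; congr (_ * _).
rewrite (eq_bigr (fun a : 'I_m => \prod_(b : 'I_m) (if (b < a)%N then H a b else 1)));
  last by move=> a _; rewrite big_mkcond.
by rewrite exchange_big /=; apply: eq_bigr => a _; rewrite [RHS]big_mkcond.
Qed.

Lemma prod_ord_gt0 m (G : 'I_m.+1 -> R) :
  \prod_(k : 'I_m.+1 | (0 < k)%N) G k = \prod_(k : 'I_m) G (lift ord0 k).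
Proof. by rewrite big_mkcond big_ord_recl /= mul1r. Qed.

Lemma prod_ord_gt_lift m (j : 'I_m) (G : 'I_m.+1 -> R) :
  \prod_(k : 'I_m.+1 | (lift ord0 j < k)%N) G k = \prod_(k : 'I_m | (j < k)%N) G (lift ord0 k).
Proof.
rewrite big_mkcond big_ord_recl /= mul1r [RHS]big_mkcond; apply: eq_bigr => k _.
by rewrite /bump /= !add1n ltnS.
Qed.

End BigOps.

Lemma sum_tuple_cat (V : nmodType) (T : finType) m1 m2 (G : (m1 + m2)%N.-tuple T -> V) :
  \sum_(v : (m1 + m2)%N.-tuple T) G v =
  \sum_(v1 : m1.-tuple T) \sum_(v2 : m2.-tuple T) G (cat_tuple v1 v2).
Proof.
rewrite pair_big /=.
pose h (x : m1.-tuple T * m2.-tuple T) := cat_tuple x.1 x.2.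
have h_inj : injective h.
  move=> [a b] [c d] /(congr1 val) /= /eqP; rewrite eqseq_cat ?size_tuple //.
  by case/andP => /eqP/val_inj -> /eqP/val_inj ->.
have h_bij : bijective h.
  by apply: inj_card_bij h_inj _; rewrite card_prod !card_tuple expnD.
by rewrite (reindex h) //; apply: onW_bij.
Qed.

Lemma not_uniq_nearest_pair (T : eqType) m (v : m.-tuple T) : ~~ uniq v -> exists i j : 'I_m,
  [/\ (i < j)%N, tnth v i = tnth v j &
      forall k : 'I_m, (i < k)%N -> (k < j)%N -> tnth v k != tnth v i].
Proof.
move=> not_uniq.
have [i [j [ij eq_ij]]] : exists i j : 'I_m, (i < j)%N /\ tnth v i = tnth v j.
  case: (boolP [exists i : 'I_m, [exists j : 'I_m, (i < j)%N && (tnth v i == tnth v j)]]).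
    by case/existsP => i /existsP [j /andP[ij /eqP eq_ij]]; exists i, j.
  move=> /existsPn no_pair; case/negP: not_uniq; apply/tuple_uniqP => x y eq_xy.
  case: (ltngtP x y) => [xy|yx|/val_inj //].
    by move: (no_pair x) => /existsPn /(_ y); rewrite xy eq_xy eqxx.
  by move: (no_pair y) => /existsPn /(_ x); rewrite yx eq_xy eqxx.
have Pj : (i < j)%N && (tnth v j == tnth v i) by rewrite ij eq_ij eqxx.
case: (@arg_minnP _ j (fun k : 'I_m => (i < k)%N && (tnth v k == tnth v i)) val Pj).
move=> j' /andP[ij' /eqP eq_ij'] min_j'.
exists i, j'; split => // k ik kj'; apply/negP => /eqP eq_ik.
by move: (min_j' k); rewrite ik eq_ik eqxx leqNgt kj' => /(_ isT).
Qed.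

Lemma tperm_ltn m (i j a b : 'I_m) : (i < j)%N ->
  (a, b) != (i, j) -> (a, b) != (j, i) ->
  ((a == i) || (a == j) -> ~~ ((i < b) && (b < j))%N) ->
  ((b == i) || (b == j) -> ~~ ((i < a) && (a < j))%N) ->
  (tperm i j a < tperm i j b)%N = (a < b)%N.
Proof.
move=> ij; rewrite !xpair_eqE.
case: (tpermP i j a) => [ai|aj|/eqP ai /eqP aj]; case: (tpermP i j b) => [bi|bj|/eqP bi /eqP bj];
  try subst a; try subst b; rewrite ?eqxx //= => h1 h2 hb ha.
all: try by rewrite !ltnn.
all: try (move: ai; rewrite -val_eqE /= => ai).
all: try (move: aj; rewrite -val_eqE /= => aj).
all: try (move: bi; rewrite -val_eqE /= => bi).
all: try (move: bj; rewrite -val_eqE /= => bj).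
all: try have {}ha := ha isT; try have {}hb := hb isT.
all: apply/idP/idP => ?; lia.
Qed.

Lemma map_perm_enum m (tau : 'S_m) : perm_eq [seq tau j | j <- enum 'I_m] (enum 'I_m).
Proof.
apply: uniq_perm; rewrite ?enum_uniq ?(map_inj_uniq perm_inj) ?enum_uniq // => x.
by rewrite mem_enum; apply/mapP; exists ((tau^-1)%g x); rewrite ?mem_enum ?permKV.
Qed.

Definition swap2 : 'S_2 := tperm ord0 (lift ord0 ord0).

Lemma perm2_cases (s : 'S_2) : s = 1%g \/ s = swap2.
Proof.
have ord2 (k : 'I_2) : k = ord0 \/ k = lift ord0 ord0.
  by case: k => [[|[|//]] ?]; [left|right]; apply: val_inj.
have s10 : s (lift ord0 ord0) != s ord0 by rewrite (inj_eq perm_inj).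
case: (ord2 (s ord0)) => s0; [left|right]; apply/permP => k; rewrite ?perm1 /swap2.
all: case: (ord2 k) => ->; rewrite ?tpermL ?tpermR //.
all: by case: (ord2 (s (lift ord0 ord0))) s10 => ->; rewrite s0 ?eqxx.
Qed.

Lemma sum_perm2 (V : nmodType) (G : 'S_2 -> V) : \sum_(s : 'S_2) G s = G 1%g + G swap2.
Proof.
have swap2_neq1 : swap2 != 1%g by apply/eqP => /permP /(_ ord0); rewrite perm1 tpermL.
rewrite (bigD1 1%g) //= (big_pred1 swap2) // => s /=.
by case: (perm2_cases s) => ->; rewrite eqxx ?swap2_neq1 // eq_sym (negPf swap2_neq1).
Qed.

Definition decreasing m n (h : 'I_m -> 'I_n) := forall a b : 'I_m, (a < b)%N -> (h b < h a)%N.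

Lemma decreasing_inj m n (h : 'I_m -> 'I_n) : decreasing h -> injective h.
Proof.
move=> h_decr a b eq_ab; case: (ltngtP a b) => [ab|ba|/val_inj //].
  by move: (h_decr _ _ ab); rewrite eq_ab ltnn.
by move: (h_decr _ _ ba); rewrite eq_ab ltnn.
Qed.

Lemma decreasing_enumeration n (x0 : 'I_n) (w : seq 'I_n) : uniq w ->
  exists h : 'I_(size w) -> 'I_n,
    decreasing h /\ perm_eq [seq h j | j <- enum 'I_(size w)] w.
Proof.
move=> uniq_w; set L := rev [seq x <- enum 'I_n | x \in w].
have perm_L : perm_eq L w.
  rewrite perm_rev; apply: uniq_perm => //; first by rewrite filter_uniq ?enum_uniq.
  by move=> x; rewrite mem_filter mem_enum andbT.
have sorted_L : sorted (fun a b : 'I_n => (b < a)%N) L.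
  have : sorted ltn (map val (enum 'I_n)) by rewrite val_enum_ord iota_ltn_sorted.
  by rewrite rev_sorted sorted_map; apply: sorted_filter => a b c; exact: ltn_trans.
have size_L : size L = size w by rewrite (perm_size perm_L).
exists (fun j => nth x0 L j); split.
  move=> a b ab; apply: (sorted_ltn_nth (leT := fun a b : 'I_n => (b < a)%N)) => //.
  - by move=> u v z /= vu zv; apply: ltn_trans vu.
  - by rewrite inE size_L.
  - by rewrite inE size_L.
rewrite (map_comp (nth x0 L) val) val_enum_ord -size_L.
by rewrite -/(mkseq (nth x0 L) (size L)) mkseq_nth.
Qed.

Section NicholsDiagonal.
Variables (F : fieldType) (n : nat) (p : 'I_n -> 'I_n -> F).
Hypothesis p_neq0 : forall i j, p i j != 0.

(** * Braiding coefficients of words *)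

Fixpoint inv_coef (w : seq 'I_n) : F :=
  if w is x :: w' then (\prod_(y <- w' | (y < x)%N) p x y) * inv_coef w' else 1.

Definition cross_coef (a b : seq 'I_n) : F :=
  \prod_(x <- a) \prod_(y <- b | (y < x)%N) p x y.

Definition bichar (a b : seq 'I_n) : F := \prod_(x <- a) \prod_(y <- b) p x y.

Definition bracket_coef (a b : seq 'I_n) : F := cross_coef a b - cross_coef b a.

Lemma inv_coef_cat a b : inv_coef (a ++ b) = inv_coef a * inv_coef b * cross_coef a b.
Proof.
elim: a => [|x a IH] /=; first by rewrite /cross_coef big_nil mul1r mulr1.
by rewrite big_cat IH /cross_coef big_cons /=; ring.
Qed.

Lemma inv_coef_neq0 w : inv_coef w != 0.
Proof.
elim: w => [|x w IH] /=; first exact: oner_neq0.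
by rewrite mulf_neq0 // prodf_seq_neq0; apply/allP => y _; apply/implyP.
Qed.

Lemma cross_coef_neq0 a b : cross_coef a b != 0.
Proof.
rewrite prodf_seq_neq0; apply/allP => x _; apply/implyP => _.
by rewrite prodf_seq_neq0; apply/allP => y _; apply/implyP.
Qed.

Lemma cross_coef_catl a b c : cross_coef (a ++ b) c = cross_coef a c * cross_coef b c.
Proof. by rewrite /cross_coef big_cat. Qed.

Lemma cross_coef_catr a b c : cross_coef a (b ++ c) = cross_coef a b * cross_coef a c.
Proof. by rewrite /cross_coef -big_split; apply: eq_bigr => x _; rewrite big_cat. Qed.

Lemma cross_coef_perml a a' b : perm_eq a a' -> cross_coef a b = cross_coef a' b.
Proof. by move=> eq_a; rewrite /cross_coef (perm_big _ eq_a). Qed.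

Lemma cross_coef_permr a b b' : perm_eq b b' -> cross_coef a b = cross_coef a b'.
Proof. by move=> eq_b; apply: eq_bigr => x _; rewrite (perm_big _ eq_b). Qed.

Lemma bichar11 x y : bichar [:: x] [:: y] = p x y.
Proof. by rewrite /bichar !big_seq1. Qed.

Lemma bracket_coef_perml a a' b : perm_eq a a' -> bracket_coef a b = bracket_coef a' b.
Proof.
by move=> eq_a; rewrite /bracket_coef (cross_coef_perml _ eq_a) (cross_coef_permr _ eq_a).
Qed.

Lemma bracket_coef_permr a b b' : perm_eq b b' -> bracket_coef a b = bracket_coef a b'.
Proof.
by move=> eq_b; rewrite /bracket_coef (cross_coef_perml _ eq_b) (cross_coef_permr _ eq_b).
Qed.

Lemma bracket_coefC a b : bracket_coef b a = - bracket_coef a b.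
Proof. by rewrite /bracket_coef opprB. Qed.

Lemma bracket_coef0 a : bracket_coef a [::] = 0.
Proof.
rewrite /bracket_coef /cross_coef big_nil.
by under eq_bigr do rewrite big_nil; rewrite big1_eq subrr.
Qed.

(* The coefficient form of the Jacobi identity for [A, [b1, B]]. *)
Lemma bracket_coef_jacobi A b1 B :
  bracket_coef A (b1 :: B) * bracket_coef [:: b1] B =
  bracket_coef A [:: b1] * bracket_coef (A ++ [:: b1]) B +
  bracket_coef [:: b1] (A ++ B) * bracket_coef A B.
Proof.
rewrite /bracket_coef (_ : b1 :: B = [:: b1] ++ B) //.
by rewrite !cross_coef_catl !cross_coef_catr; ring.
Qed.

Definition odd_symmetric :=
  (forall i, p i i = -1) /\ (forall i j, i != j -> p i j * p j i = 1).

Section OddSymmetric.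
Hypothesis p_odd_sym : odd_symmetric.

Lemma cross_coefC a b : {in a, forall x, x \notin b} ->
  cross_coef b a = bichar b a * cross_coef a b.
Proof.
move=> dis; rewrite /cross_coef /bichar.
rewrite [X in _ = _ * X](eq_bigr (fun x : 'I_n => \prod_(y <- b) (if (y < x)%N then p x y else 1)));
  last by move=> x _; rewrite big_mkcond.
rewrite [X in _ = _ * X]exchange_big -big_split /= big_seq [RHS]big_seq.
apply: eq_bigr => y yb; rewrite big_mkcond -big_split /= big_seq [RHS]big_seq.
apply: eq_bigr => x xa.
have nxy : x != y by apply: contraNneq (dis x xa) => ->.
case: (ltngtP x y) => [_|_|/val_inj exy]; rewrite ?mulr1 //.
- by rewrite p_odd_sym.2 // eq_sym.
- by rewrite exy eqxx in nxy.
Qed.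

Lemma bichar_inv a b : {in a, forall x, x \notin b} -> bichar a b * bichar b a = 1.
Proof.
move=> dis; rewrite /bichar [X in _ * X]exchange_big -big_split /=.
rewrite big_seq big1 // => x xa; rewrite -big_split /= big_seq big1 // => y yb.
by apply: p_odd_sym.2; apply: contraNneq (dis x xa) => ->.
Qed.

Lemma bracket_coef1_neq0 x l : x \notin l ->
  (bracket_coef [:: x] l != 0) = (bichar [:: x] l != 1).
Proof.
move=> xl.
have dis : {in [:: x], forall y, y \notin l} by move=> y; rewrite inE => /eqP ->.
rewrite /bracket_coef (cross_coefC dis) -{1}[cross_coef _ _]mul1r -mulrBl mulf_eq0.
rewrite negb_or cross_coef_neq0 andbT subr_eq0.
have inv := bichar_inv dis.
apply/idP/idP; apply: contra => /eqP E.
  by rewrite -inv E mul1r.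
by rewrite -inv -E mulr1.
Qed.

End OddSymmetric.

Fixpoint leaves (t : btree n) : seq 'I_n :=
  match t with BLeaf i => [:: i] | BNode t1 t2 => leaves t1 ++ leaves t2 end.

Lemma tdegE t j : tdeg t j = count_mem j (leaves t).
Proof. by elim: t => [i|t1 IH1 t2 IH2] /=; rewrite ?addn0 // count_cat IH1 IH2. Qed.

Lemma pdeg_leaves t1 t2 : pdeg p (tdeg t1) (tdeg t2) = bichar (leaves t1) (leaves t2).
Proof.
rewrite /pdeg /bichar -(prod_count_mem (fun i => \prod_(y <- leaves t2) p i y)).
apply: eq_bigr => i _; rewrite -[in RHS]prod_count_mem -prodrXl; apply: eq_bigr => j _.
by rewrite !tdegE -exprM mulnC.
Qed.

Lemma size_leaves_gt0 t : (0 < size (leaves t))%N.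
Proof. by elim: t => [i|t1 IH1 t2 IH2] //=; rewrite size_cat addn_gt0 IH1. Qed.

Lemma size_leaves2 t : size (leaves t) = 2 -> exists a b, t = BNode (BLeaf a) (BLeaf b).
Proof.
case: t => [//|t1 t2] /=; rewrite size_cat.
case: t1 => [a|t11 t12]; case: t2 => [b|t21 t22] /=; first by exists a, b.
all: rewrite ?size_cat => size2; exfalso.
all: try have := size_leaves_gt0 t11; try have := size_leaves_gt0 t12.
all: try have := size_leaves_gt0 t21; try have := size_leaves_gt0 t22; lia.
Qed.

Definition supported_on (f : tens F n) (u : seq 'I_n) := forall w, f w != 0 -> perm_eq w u.

Definition tdelta (w : seq 'I_n) : tens F n := fun x => (x == w)%:R.

Lemma tdelta_supported w : supported_on (tdelta w) w.
Proof. by move=> x; rewrite /tdelta; case: (x =P w) => [->|_]; rewrite ?perm_refl ?eqxx. Qed.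

Lemma supported_on_perm f u u' : perm_eq u u' -> supported_on f u -> supported_on f u'.
Proof. by move=> eq_u suppf w /suppf /perm_trans; apply. Qed.

Lemma tsub_supported f g u :
  supported_on f u -> supported_on g u -> supported_on (tsub f g) u.
Proof.
move=> suppf suppg w; rewrite /tsub.
by case: (f w =P 0) => [->|/eqP /suppf //]; rewrite sub0r oppr_eq0 => /suppg.
Qed.

Lemma tscale_supported c f u : supported_on f u -> supported_on (tscale c f) u.
Proof. by move=> suppf w; rewrite /tscale mulf_eq0 negb_or => /andP[_ /suppf]. Qed.

Lemma tmul_supported f g u1 u2 :
  supported_on f u1 -> supported_on g u2 -> supported_on (tmul f g) (u1 ++ u2).
Proof.
move=> suppf suppg w; rewrite /tmul; apply: contraTT => not_perm.
rewrite negbK; apply/eqP/big1 => k _; rewrite -(cat_take_drop k w) in not_perm.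
case: (f (take k w) =P 0) => [->|/eqP /suppf eq1]; first by rewrite mul0r.
case: (g (drop k w) =P 0) => [->|/eqP /suppg eq2]; first by rewrite mulr0.
by rewrite perm_cat in not_perm.
Qed.

Lemma evalMinus_supported t : supported_on (evalMinus F t) (leaves t).
Proof.
elim: t => [i|t1 IH1 t2 IH2] /=; first exact: tdelta_supported.
apply: tsub_supported; first exact: tmul_supported.
by apply: supported_on_perm (tmul_supported IH2 IH1); rewrite perm_catC.
Qed.

Lemma evalL_supported t : supported_on (evalL p t) (leaves t).
Proof.
elim: t => [i|t1 IH1 t2 IH2] /=; first exact: tdelta_supported.
apply: tsub_supported; apply: tscale_supported; first exact: tmul_supported.
by apply: supported_on_perm (tmul_supported IH2 IH1); rewrite perm_catC.
Qed.

Lemma supported_on_size f u w : supported_on f u -> size w != size u -> f w = 0.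
Proof. by move=> suppf; apply: contraNeq => /suppf /perm_size ->. Qed.

(** * The functionals [psi] *)

(* The length [m] is a separate argument so that tuples can be split;
   [psi m u f = 0] unless [m = size u]. *)
Definition psi m (u : seq 'I_n) (f : tens F n) : F :=
  \sum_(v : m.-tuple 'I_n | perm_eq v u) inv_coef v * f v.

Lemma psi_perm m u u' f : perm_eq u u' -> psi m u f = psi m u' f.
Proof. by move=> eq_u; apply: eq_bigl => v; rewrite (permPr eq_u). Qed.

Lemma eq_psi m u (f g : tens F n) : (forall w, f w = g w) -> psi m u f = psi m u g.
Proof. by move=> eq_fg; apply: eq_bigr => v _; rewrite eq_fg. Qed.

Lemma psiB m u f g : psi m u (tsub f g) = psi m u f - psi m u g.
Proof. by rewrite /psi -sumrB; apply: eq_bigr => v _; rewrite /tsub mulrBr. Qed.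

Lemma psiD m u f g : psi m u (tadd f g) = psi m u f + psi m u g.
Proof. by rewrite /psi -big_split; apply: eq_bigr => v _; rewrite /tadd mulrDr. Qed.

Lemma psiZ m u c f : psi m u (tscale c f) = c * psi m u f.
Proof. by rewrite /psi mulr_sumr; apply: eq_bigr => v _; rewrite /tscale mulrCA. Qed.

Lemma psi_span m u k (E : btree n -> tens F n) (ts : 'I_k -> btree n) (cs : 'I_k -> F) :
  psi m u (fun w => \sum_(i < k) cs i * E (ts i) w) = \sum_(i < k) cs i * psi m u (E (ts i)).
Proof.
rewrite /psi; under eq_bigr do rewrite mulr_sumr.
rewrite exchange_big /=; apply: eq_bigr => i _; rewrite mulr_sumr.
by apply: eq_bigr => v _; rewrite mulrCA.
Qed.

Lemma psi_supported_eq0 m u f w : supported_on f w -> ~~ perm_eq w u -> psi m u f = 0.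
Proof.
move=> suppf not_wu; rewrite /psi big1 // => v vu.
case: (f v =P 0) => [->|/eqP /suppf vw]; first by rewrite mulr0.
by move: not_wu; rewrite -(permPl vw) vu.
Qed.

Lemma psi_tdelta w : psi (size w) w (tdelta w) = inv_coef w.
Proof.
rewrite /psi (bigD1 (in_tuple w)) ?perm_refl //= big1 ?addr0 /tdelta ?eqxx ?mulr1 //.
by move=> v /andP[_ ne]; rewrite -val_eqE /= in ne; rewrite (negPf ne) mulr0.
Qed.

Lemma psi_nil f : psi 0 [::] f = f [::].
Proof. by rewrite /psi (big_pred1 [tuple]) /= ?mul1r // => v; rewrite tuple0 /= eqxx. Qed.

Lemma tmul_split f g u w : supported_on f u ->
  (size u <= size w)%N -> tmul f g w = f (take (size u) w) * g (drop (size u) w).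
Proof.
move=> suppf le_uw.
have lt : (size u < (size w).+1)%N by rewrite ltnS.
rewrite /tmul (bigD1 (Ordinal lt)) //= big1 ?addr0 // => k ne.
rewrite (supported_on_size suppf) ?mul0r // size_take_min.
apply: contra_neq ne => eq_k; apply: val_inj => /=.
by have := ltn_ord k; lia.
Qed.

Lemma psi_tmul u1 u2 f g : supported_on f u1 -> supported_on g u2 ->
  psi (size (u1 ++ u2)) (u1 ++ u2) (tmul f g) =
  cross_coef u1 u2 * psi (size u1) u1 f * psi (size u2) u2 g.
Proof.
move=> suppf suppg; rewrite size_cat /psi big_mkcond sum_tuple_cat /=.
rewrite [X in _ = _ * X * _]big_mkcond [X in _ = _ * _ * X]big_mkcond /=.
rewrite -mulrA big_distrl mulr_sumr /=; apply: eq_bigr => v1 _.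
rewrite big_distrr mulr_sumr /=; apply: eq_bigr => v2 _.
rewrite (@tmul_split f g u1) ?size_cat ?size_tuple ?leq_addr //.
rewrite take_size_cat ?drop_size_cat ?size_tuple //.
case: (f v1 =P 0) => [->|/eqP /suppf v1u1]; first by rewrite !(mul0r, mulr0, if_same).
case: (g v2 =P 0) => [->|/eqP /suppg v2u2]; first by rewrite !(mul0r, mulr0, if_same).
rewrite perm_cat // v1u1 v2u2 inv_coef_cat.
by rewrite (cross_coef_perml _ v1u1) (cross_coef_permr _ v2u2); ring.
Qed.

Lemma psi_tmulC u1 u2 f g : supported_on f u1 -> supported_on g u2 ->
  psi (size (u1 ++ u2)) (u1 ++ u2) (tmul g f) =
  cross_coef u2 u1 * psi (size u1) u1 f * psi (size u2) u2 g.
Proof.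
move=> suppf suppg; rewrite (@psi_perm _ _ (u2 ++ u1)); last by rewrite perm_catC.
by rewrite !size_cat addnC -size_cat psi_tmul //; ring.
Qed.

(** * The quantum symmetrizer *)

Lemma symmetrizer_ext f g w : (forall x, f x = g x) -> symmetrizer p f w = symmetrizer p g w.
Proof. by move=> eq_fg; apply: eq_bigr => v _; apply: eq_bigr => s _; rewrite eq_fg. Qed.

Lemma symmetrizerD f g w :
  symmetrizer p (tadd f g) w = symmetrizer p f w + symmetrizer p g w.
Proof.
rewrite -big_split; apply: eq_bigr => v _.
by rewrite -big_split; apply: eq_bigr => s _; rewrite /tadd mulrDr.
Qed.

Lemma symmetrizerZ c f w : symmetrizer p (tscale c f) w = c * symmetrizer p f w.
Proof.
rewrite mulr_sumr; apply: eq_bigr => v _.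
by rewrite mulr_sumr; apply: eq_bigr => s _; rewrite /tscale mulrCA.
Qed.

Lemma nichols_ideal_ext f g : (forall w, f w = g w) -> nichols_ideal p f -> nichols_ideal p g.
Proof.
move=> eq_fg [[s supp_f] sym_f]; split=> [|w]; last by rewrite -(symmetrizer_ext _ eq_fg).
by exists s => w /supp_f; rewrite eq_fg.
Qed.

Lemma nichols_ideal0 f : (forall w, f w = 0) -> nichols_ideal p f.
Proof.
move=> f0; split=> [|w]; first by exists [::] => w _; rewrite f0.
by rewrite /symmetrizer big1 // => v _; rewrite big1 // => s _; rewrite f0 mulr0.
Qed.

Lemma nichols_idealD f g : nichols_ideal p f -> nichols_ideal p g -> nichols_ideal p (tadd f g).
Proof.
move=> [[s1 supp_f] sym_f] [[s2 supp_g] sym_g]; split=> [|w]; last first.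
  by rewrite symmetrizerD sym_f sym_g addr0.
exists (s1 ++ s2) => w; rewrite mem_cat negb_or => /andP[w1 w2].
by rewrite /tadd supp_f // supp_g // addr0.
Qed.

Lemma nichols_idealZ c f : nichols_ideal p f -> nichols_ideal p (tscale c f).
Proof.
move=> [[s supp_f] sym_f]; split=> [|w]; last by rewrite symmetrizerZ sym_f mulr0.
by exists s => w /supp_f; rewrite /tscale => ->; rewrite mulr0.
Qed.

Lemma inv_coef_tuple m (v : m.-tuple 'I_n) : inv_coef v =
  \prod_(a : 'I_m) \prod_(b : 'I_m | (a < b)%N && (tnth v b < tnth v a)%N)
    p (tnth v a) (tnth v b).
Proof.
elim: m v => [|m IH] v; first by rewrite tuple0 /= big_ord0.
case: v / tupleP => x v /=.
rewrite big_ord_recl /= IH; congr (_ * _).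
  rewrite big_tuple big_mkcond [RHS]big_mkcond big_ord_recl /= mul1r.
  by apply: eq_bigr => b _; rewrite tnthS tnth0.
apply: eq_bigr => a _; rewrite big_mkcond [RHS]big_mkcond big_ord_recl /= mul1r.
by apply: eq_bigr => b _; rewrite !tnthS /bump /= !add1n ltnS.
Qed.

Lemma perm_wordE m (s : 'S_m) (v : m.-tuple 'I_n) :
  perm_word s v = [tuple tnth v ((s^-1)%g k) | k < m].
Proof. by []. Qed.

Lemma inv_coef_perm_word m (s : 'S_m) (v : m.-tuple 'I_n) :
  inv_coef (perm_word s v) =
  \prod_(a : 'I_m) \prod_(b : 'I_m | (s a < s b)%N && (tnth v b < tnth v a)%N)
    p (tnth v a) (tnth v b).
Proof.
rewrite perm_wordE inv_coef_tuple (reindex_inj (@perm_inj _ s)); apply: eq_bigr => a _.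
rewrite (reindex_inj (@perm_inj _ s)) /=.
by apply: eq_big => [b|b _]; rewrite !tnth_mktuple !permK.
Qed.

Lemma perm_word_perm_eq m (s : 'S_m) (v : m.-tuple 'I_n) : perm_eq (perm_word s v) v.
Proof.
rewrite /perm_word (map_comp (tnth v)) -[X in perm_eq _ X](map_tnth_enum v).
apply: perm_map; apply: uniq_perm; rewrite ?enum_uniq ?(map_inj_uniq perm_inj) ?enum_uniq //.
by move=> x; rewrite mem_enum; apply/mapP; exists (s x); rewrite ?mem_enum ?permK.
Qed.

Lemma perm_word_surj m (v : m.-tuple 'I_n) u :
  perm_eq u v -> exists s : 'S_m, perm_word s v = u.
Proof. by case/tuple_permP => q ->; exists (q^-1)%g; rewrite /perm_word invgK. Qed.

Lemma perm_word_inj m (v : m.-tuple 'I_n) (s s' : 'S_m) : uniq v ->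
  perm_word s v = perm_word s' v -> s = s'.
Proof.
move=> /tuple_uniqP v_inj eq_ss'; apply: invg_inj; apply/permP => k.
have /(congr1 (fun t => tnth t k)) : [tuple tnth v ((s^-1)%g k) | k < m] =
                           [tuple tnth v ((s'^-1)%g k) | k < m] by apply: val_inj.
by rewrite !tnth_mktuple => /v_inj.
Qed.

Definition repeat_sign m (s : 'S_m) (v : m.-tuple 'I_n) : F :=
  \prod_(a : 'I_m) \prod_(b : 'I_m | (a < b)%N && ((s b < s a)%N && (tnth v a == tnth v b)))
    (-1).

Lemma repeat_sign_uniq m (s : 'S_m) (v : m.-tuple 'I_n) : uniq v -> repeat_sign s v = 1.
Proof.
move=> /tuple_uniqP v_inj; rewrite /repeat_sign big1 // => a _.
rewrite big1 // => b /andP[ab /andP[_ /eqP /v_inj eq_ab]].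
by rewrite eq_ab ltnn in ab.
Qed.

Lemma perm_word_tperm m (s : 'S_m) (v : m.-tuple 'I_n) (i j : 'I_m) :
  tnth v i = tnth v j -> perm_word (tperm i j * s)%g v = perm_word s v.
Proof.
move=> eq_ij; rewrite !perm_wordE; congr val; apply: eq_mktuple => k.
by rewrite invMg permM tpermV; case: tpermP => // ->.
Qed.

Lemma repeat_sign_tperm m (s : 'S_m) (v : m.-tuple 'I_n) (i j : 'I_m) :
  (i < j)%N -> tnth v i = tnth v j ->
  (forall k : 'I_m, (i < k)%N -> (k < j)%N -> tnth v k != tnth v i) ->
  repeat_sign (tperm i j * s)%g v = - repeat_sign s v.
Proof.
move=> ij eq_ij between; set t := tperm i j.
have vt x : tnth v (t x) = tnth v x by rewrite /t; case: tpermP => // ->.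
rewrite /repeat_sign !pair_big_dep /= !(big_mkcond _ (fun q : 'I_m * 'I_m => -1)) /=.
have t2_inj : injective (fun q : 'I_m * 'I_m => (t q.1, t q.2)).
  by move=> [a b] [c d] /= [/perm_inj -> /perm_inj ->].
rewrite (reindex_inj t2_inj) /=.
under eq_bigr => q _ do rewrite !permM !tpermK !vt.
have nij : i != j by rewrite -val_eqE /= neq_ltn ij.
have ij_ji : (i, j) != (j, i) by rewrite xpair_eqE negb_and nij.
rewrite (bigD1 (i, j)) // (bigD1 (j, i)) 1?eq_sym //=.
rewrite [in RHS](bigD1 (i, j)) // [in RHS](bigD1 (j, i)) 1?eq_sym //=.
rewrite /t tpermL tpermR ltnNge ltnW //= ij eq_ij eqxx /=.
set R1 := \prod_(q | _) _; set R2 := \prod_(q | _) _.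
suff -> : R1 = R2.
  have : s i != s j by rewrite (inj_eq perm_inj).
  by rewrite -val_eqE /=; case: ltngtP => // _ _; rewrite ?mul1r ?mulN1r ?opprK.
apply: eq_bigr => [[a b]] /= /andP[q_ij q_ji].
case: (tnth v a =P tnth v b) => eq_ab; rewrite ?andbF //.
rewrite tperm_ltn // => [a_ij|b_ij]; apply/negP.
  move=> /andP[ib bj]; move: (between b ib bj); rewrite -eq_ab.
  by case/orP: a_ij => /eqP ->; rewrite ?eq_ij eqxx.
move=> /andP[ia aj]; move: (between a ia aj); rewrite eq_ab.
by case/orP: b_ij => /eqP ->; rewrite ?eq_ij eqxx.
Qed.

Section OddSymmetricSymmetrizer.
Hypothesis p_odd_sym : odd_symmetric.

(* Pairing the inversion [(a, b)] with [(b, a)]: the factors [p x y p y x] cancel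
   for distinct letters, and equal letters leave [p x x = -1]. *)
Lemma perm_coef_inv_coef m (s : 'S_m) (v : m.-tuple 'I_n) :
  perm_coef p s v * inv_coef (perm_word s v) = inv_coef v * repeat_sign s v.
Proof.
rewrite inv_coef_perm_word inv_coef_tuple /repeat_sign /perm_coef.
rewrite [X in _ * X = _](eq_bigr (fun a : 'I_m => \prod_(b : 'I_m)
  (if (s a < s b)%N && (tnth v b < tnth v a)%N then p (tnth v a) (tnth v b) else 1)));
  last by move=> a _; rewrite big_mkcond.
rewrite prod_ord_pairs [X in _ * (_ * X)]big1 ?mulr1; last by move=> a _; rewrite ltnn.
rewrite -!big_split /=; apply: eq_bigr => a _.
rewrite !big_mkcondr -!big_split /=; apply: eq_bigr => b ab.
set x := tnth v a; set y := tnth v b.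
have sab : s a != s b by rewrite (inj_eq perm_inj) -val_eqE /= neq_ltn ab.
have xyE : (x == y) = (val x == val y) by rewrite -val_eqE.
move: sab; rewrite -val_eqE /= => sab.
case: (ltngtP (s a) (s b)) sab => // hs _; rewrite ?andbF ?andbT /=;
  case: (ltngtP x y) xyE => hxy xyE; rewrite ?xyE /= ?mulr1 ?mul1r //.
- by apply: p_odd_sym.2; rewrite xyE.
- by move: hxy => /val_inj ->; rewrite p_odd_sym.1.
Qed.

Lemma symmetrizer_uniq u f : uniq u -> symmetrizer p f u = (inv_coef u)^-1 * psi (size u) u f.
Proof.
move=> uniq_u; rewrite /symmetrizer /psi mulr_sumr [RHS]big_mkcond /=.
apply: eq_bigr => v _; case: ifPn => [vu|not_vu]; last first.
  rewrite big1 // => s /eqP eq_u; move: not_vu.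
  by rewrite -[X in perm_eq _ X]eq_u perm_sym perm_word_perm_eq.
have uniq_v : uniq v by rewrite (perm_uniq vu).
have [s0 eq_s0] := perm_word_surj (etrans (perm_sym _ _) vu).
rewrite (big_pred1 s0) => [|s]; last first.
  by apply/eqP/eqP => [eq_u|->//]; apply: (perm_word_inj uniq_v); rewrite eq_u eq_s0.
have := perm_coef_inv_coef s0 v; rewrite eq_s0 repeat_sign_uniq // mulr1 => <-.
by field; apply: inv_coef_neq0.
Qed.

Lemma symmetrizer_not_uniq u f : (2%:R : F) != 0 -> ~~ uniq u -> symmetrizer p f u = 0.
Proof.
move=> two not_uniq_u; rewrite /symmetrizer big1 // => v _.
have [uniq_v|not_uniq_v] := boolP (uniq v).
  rewrite big1 // => s /eqP eq_u; move: not_uniq_u.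
  by rewrite -[X in uniq X]eq_u (perm_uniq (perm_word_perm_eq s v)) uniq_v.
have [i [j [ij eq_ij between]]] := not_uniq_nearest_pair not_uniq_v.
rewrite (eq_bigr (fun s => inv_coef v / inv_coef u * f v * repeat_sign s v)); last first.
  move=> s /eqP eq_u; have := perm_coef_inv_coef s v; rewrite eq_u => coefE.
  have /(congr1 (fun x => x / inv_coef u)) := coefE.
  by rewrite mulfK ?inv_coef_neq0 // => ->; field; apply: inv_coef_neq0.
rewrite -mulr_sumr; apply/eqP; rewrite mulf_eq0; apply/orP; right; apply/eqP.
set S := \sum_(s | _) _.
(* [s |-> (i j) s] is a sign-reversing involution on the terms of [S]. *)
have S_opp : S = - S.
  rewrite {1}/S (reindex_inj (mulgI (tperm i j))) /= -sumrN.
  apply: eq_big => [s|s _]; last exact: repeat_sign_tperm.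
  by rewrite perm_word_tperm.
have : S *+ 2 = 0 by rewrite mulr2n {1}S_opp addNr.
by move/eqP; rewrite -mulr_natl mulf_eq0 (negPf two) => /eqP.
Qed.

Lemma nichols_idealE f : (2%:R : F) != 0 ->
  nichols_ideal p f <-> tfinsupp f /\ (forall u, uniq u -> psi (size u) u f = 0).
Proof.
move=> two; split=> [[supp_f sym_f]|[supp_f psi_f]]; split=> // u.
  move=> uniq_u; move: (sym_f u); rewrite symmetrizer_uniq // => /eqP.
  by rewrite mulf_eq0 invr_eq0 (negPf (inv_coef_neq0 u)) => /eqP.
have [uniq_u|not_uniq_u] := boolP (uniq u); last exact: symmetrizer_not_uniq.
by rewrite symmetrizer_uniq // psi_f // mulr0.
Qed.

End OddSymmetricSymmetrizer.

(** * Admissible brackets and combs *)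

Definition tree_psi (E : btree n -> tens F n) t := psi (size (leaves t)) (leaves t) (E t).

Fixpoint admissible (t : btree n) : bool :=
  if t is BNode t1 t2 then
    [&& admissible t1, admissible t2 & bracket_coef (leaves t1) (leaves t2) != 0]
  else true.

Lemma psi_tgen i : psi 1 [:: i] (tgen F i) = 1.
Proof. by have := psi_tdelta [:: i]; rewrite /= big_nil mulr1. Qed.

Lemma tree_psi_evalMinus_node t1 t2 :
  tree_psi (@evalMinus F n) (BNode t1 t2) = tree_psi (@evalMinus F n) t1 *
    tree_psi (@evalMinus F n) t2 * bracket_coef (leaves t1) (leaves t2).
Proof.
rewrite /tree_psi /= psiB.
rewrite psi_tmul ?psi_tmulC //; try exact: evalMinus_supported.
by rewrite /bracket_coef; ring.
Qed.

Lemma tree_psi_evalMinus_neq0 t : (tree_psi (@evalMinus F n) t != 0) = admissible t.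
Proof.
elim: t => [i|t1 IH1 t2 IH2]; first by rewrite /tree_psi psi_tgen oner_neq0.
by rewrite tree_psi_evalMinus_node /= !mulf_eq0 !negb_or IH1 IH2 andbA.
Qed.

Section OddSymmetricTrees.
Hypothesis p_odd_sym : odd_symmetric.

Lemma tree_psi_evalL_node t1 t2 : uniq (leaves t1 ++ leaves t2) ->
  tree_psi (evalL p) (BNode t1 t2) =
  - (tree_psi (evalL p) t1 * tree_psi (evalL p) t2 * bracket_coef (leaves t1) (leaves t2)).
Proof.
rewrite cat_uniq => /and3P[_ disj _].
have dis : {in leaves t1, forall x, x \notin leaves t2}.
  by move=> x x1; apply: contra disj => x2; apply/hasP; exists x.
rewrite /tree_psi /= psiB !psiZ.
rewrite psi_tmul ?psi_tmulC //; try exact: evalL_supported.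
rewrite !pdeg_leaves /bracket_coef (cross_coefC p_odd_sym dis).
have inv := bichar_inv p_odd_sym dis.
have P21_neq0 : bichar (leaves t2) (leaves t1) != 0.
  by apply: contra_eq_neq inv => ->; rewrite mulr0 eq_sym oner_neq0.
have -> : bichar (leaves t1) (leaves t2) = (bichar (leaves t2) (leaves t1))^-1.
  by rewrite -[LHS](mulfK P21_neq0) inv mul1r.
by field.
Qed.

Lemma tree_psi_evalL_neq0 t : uniq (leaves t) -> (tree_psi (evalL p) t != 0) = admissible t.
Proof.
elim: t => [i|t1 IH1 t2 IH2] uniq_t; first by rewrite /tree_psi psi_tgen oner_neq0.
have := uniq_t; rewrite /= cat_uniq => /and3P[uniq1 _ uniq2].
by rewrite tree_psi_evalL_node // oppr_eq0 /= !mulf_eq0 !negb_or IH1 // IH2 // andbA.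
Qed.

End OddSymmetricTrees.

Fixpoint comb_admissible (o : seq 'I_n) : bool :=
  if o is x :: o' then
    ((o' == [::]) || (bracket_coef [:: x] o' != 0)) && comb_admissible o'
  else true.

Fixpoint comb (x : 'I_n) (o : seq 'I_n) : btree n :=
  if o is y :: o' then BNode (BLeaf x) (comb y o') else BLeaf x.

Lemma leaves_comb x o : leaves (comb x o) = x :: o.
Proof. by elim: o x => //= y o IH x; rewrite IH. Qed.

Lemma admissible_comb x o : admissible (comb x o) = comb_admissible (x :: o).
Proof.
elim: o x => [|y o IH] x //; rewrite [comb _ _]/= [admissible _]/= IH leaves_comb.
by rewrite [comb_admissible (x :: _)]/= andbC.
Qed.

(* Induction on [oB]: by the Jacobi identity, one of the two products on the
   right of [bracket_coef_jacobi] is nonzero, and either way the first letter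
   of [oB] can be moved to the front of a shorter admissible comb. *)
Lemma comb_admissible_cat oA oB : comb_admissible oA -> comb_admissible oB ->
  bracket_coef oA oB != 0 -> exists o, perm_eq o (oA ++ oB) /\ comb_admissible o.
Proof.
elim: oB oA => [|b1 oB IH] oA combA combB; first by rewrite bracket_coef0 eqxx.
have b1A : perm_eq (b1 :: oA) (oA ++ [:: b1]) by rewrite perm_sym cats1 perm_rcons.
have b1AB : perm_eq (b1 :: oA ++ oB) (oA ++ b1 :: oB).
  by rewrite perm_sym; apply/permPl/(perm_catCA oA [:: b1] oB).
have comb_b1 oC : comb_admissible oC -> bracket_coef oC [:: b1] != 0 ->
    comb_admissible (b1 :: oC).
  by move=> combC neq0; rewrite /= combC andbT bracket_coefC oppr_eq0 neq0 orbT.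
have [->|oB_neq0] := eqVneq oB [::] => neq0.
  by exists (b1 :: oA); split; last exact: comb_b1.
move: combB => /= /andP[]; rewrite (negPf oB_neq0) /= => b1_oB combB.
have [/andP[A_b1 Ab1_B]|/andP[b1_AB A_B]] :
    (bracket_coef oA [:: b1] != 0) && (bracket_coef (oA ++ [:: b1]) oB != 0) \/
    (bracket_coef [:: b1] (oA ++ oB) != 0) && (bracket_coef oA oB != 0).
  apply/orP; rewrite -!negb_or -!mulf_eq0 -negb_and; apply/negP => /andP[/eqP e1 /eqP e2].
  move: (bracket_coef_jacobi oA b1 oB); rewrite e1 e2 addr0 => /eqP.
  by rewrite mulf_eq0 (negPf neq0) (negPf b1_oB).
- have b1A_B : bracket_coef (b1 :: oA) oB != 0 by rewrite (bracket_coef_perml _ b1A).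
  have [o [perm_o comb_o]] := IH (b1 :: oA) (comb_b1 _ combA A_b1) combB b1A_B.
  by exists o; split=> //; apply: perm_trans perm_o b1AB.
- have [o [perm_o comb_o]] := IH oA combA combB A_B.
  exists (b1 :: o); split; first by rewrite -(perm_cons b1) in perm_o; rewrite (permPl perm_o).
  by rewrite /= comb_o andbT (bracket_coef_permr _ perm_o) b1_AB orbT.
Qed.

Lemma admissible_comb_exists t :
  admissible t -> exists o, perm_eq o (leaves t) /\ comb_admissible o.
Proof.
elim: t => [i|t1 IH1 t2 IH2] /=; first by exists [:: i].
case/and3P => /IH1 [oA [permA combA]] /IH2 [oB [permB combB]] neq0.
have neq0' : bracket_coef oA oB != 0.
  by rewrite (bracket_coef_perml _ permA) (bracket_coef_permr _ permB).
have [o [perm_o comb_o]] := comb_admissible_cat combA combB neq0'.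
by exists o; split=> //; rewrite (permPl perm_o) perm_cat.
Qed.

Definition ordering_condition := forall m (h : 'I_m -> 'I_n), (2 <= m)%N -> decreasing h ->
  exists tau : 'S_m, \prod_(j : 'I_m | (j.+1 < m)%N)
     (\prod_(k : 'I_m | (j < k)%N) p (h (tau j)) (h (tau k)) - 1) != 0.

Lemma cond3E : cond3 p <-> odd_symmetric /\ ordering_condition.
Proof. by split=> [[]|[[]]]. Qed.

Section OddSymmetricCombs.
Hypothesis p_odd_sym : odd_symmetric.

Lemma comb_admissible_map m (g : 'I_m -> 'I_n) : injective g ->
  comb_admissible [seq g j | j <- enum 'I_m] <->
  forall j : 'I_m, (j.+1 < m)%N -> \prod_(k : 'I_m | (j < k)%N) p (g j) (g k) != 1.
Proof.
elim: m g => [|m IH] g g_inj; first by rewrite enum_ord0; split=> // _ [].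
have g'_inj : injective (g \o lift ord0) by move=> a b /g_inj /lift_inj.
have {}IH := IH _ g'_inj.
rewrite enum_ordSl /= -map_comp; set rest := map _ _.
have g0_rest : g ord0 \notin rest.
  by apply/mapP => [[k _ /g_inj eq_k]]; move: (neq_lift ord0 k); rewrite -eq_k eqxx.
have bichar_rest : bichar [:: g ord0] rest = \prod_(k : 'I_m) p (g ord0) (g (lift ord0 k)).
  by rewrite /bichar big_seq1 /rest big_map big_enum.
have rest_nil : (rest == [::]) = (m == 0%N) by rewrite -size_eq0 size_map size_enum_ord.
rewrite (bracket_coef1_neq0 p_odd_sym g0_rest) bichar_rest rest_nil; split.
  case/andP => H0 Hrest j; case: (unliftP ord0 j) => [j'|] -> /=.
    by rewrite ltnS prod_ord_gt_lift; apply: (proj1 IH Hrest).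
  rewrite prod_ord_gt0 ltnS lt0n => /negPf m_neq0.
  by rewrite m_neq0 in H0.
move=> H; apply/andP; split.
  case: eqP => //= /eqP m_neq0; move: (H ord0); rewrite prod_ord_gt0; apply.
  by rewrite /= ltnS lt0n.
apply/(proj2 IH) => j jm; move: (H (lift ord0 j)); rewrite prod_ord_gt_lift; apply.
by rewrite /= /bump /= add1n ltnS.
Qed.

Lemma ordering_comb_admissible m (h : 'I_m -> 'I_n) : injective h ->
  (exists tau : 'S_m, \prod_(j : 'I_m | (j.+1 < m)%N)
        (\prod_(k : 'I_m | (j < k)%N) p (h (tau j)) (h (tau k)) - 1) != 0) <->
  (exists o, perm_eq o [seq h j | j <- enum 'I_m] /\ comb_admissible o).
Proof.
move=> h_inj; split.
  case=> tau tau_neq0; exists [seq h (tau j) | j <- enum 'I_m]; split.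
    by rewrite (map_comp h tau); apply: perm_map; apply: map_perm_enum.
  have htau_inj : injective (h \o tau) by move=> a b /h_inj /perm_inj.
  apply/(comb_admissible_map htau_inj) => j jm.
  by move: tau_neq0 => /prodf_neq0 /(_ j jm); rewrite subr_eq0.
case=> o [perm_o comb_o].
have [q eq_o] := tuple_permP (s := o) (t := [tuple h j | j < m]) perm_o.
exists q; have hq_inj : injective (h \o q) by move=> a b /h_inj /perm_inj.
have : comb_admissible [seq (h \o q) j | j <- enum 'I_m].
  by move: comb_o; rewrite eq_o; congr comb_admissible; apply: eq_map => k /=; rewrite tnth_mktuple.
move/(comb_admissible_map hq_inj) => H.
by apply/prodf_neq0 => j jm; rewrite subr_eq0; apply: H.
Qed.

Hypothesis ordering : ordering_condition.

Lemma admissible_tree_exists w : uniq w -> w != [::] ->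
  exists t, perm_eq (leaves t) w /\ admissible t.
Proof.
case: w => // x0 w' uniq_w _; have [->|w'_neq0] := eqVneq w' [::]; first by exists (BLeaf x0).
have [h [h_decr perm_h]] := decreasing_enumeration x0 uniq_w.
have size_w : (2 <= size (x0 :: w'))%N by rewrite /= ltnS lt0n size_eq0.
have [[|y o] [perm_o comb_o]] :=
  proj1 (ordering_comb_admissible (decreasing_inj h_decr)) (ordering size_w h_decr).
  by move/perm_size: perm_o; rewrite (perm_size perm_h).
exists (comb y o); rewrite leaves_comb admissible_comb comb_o.
by rewrite (permPl perm_o).
Qed.

End OddSymmetricCombs.

(** * Words of length two *)

Lemma tmul2 (f g : tens F n) x y :
  tmul f g [:: x; y] = f [::] * g [:: x; y] + f [:: x] * g [:: y] + f [:: x; y] * g [::].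
Proof. by rewrite /tmul /= !big_ord_recl big_ord0 /= addr0 addrA. Qed.

Lemma tmul_tgen2 (a b x y : 'I_n) :
  tmul (tgen F a) (tgen F b) [:: x; y] = (x == a)%:R * (y == b)%:R.
Proof. by rewrite tmul2 /tgen /= !eqseq_cons !andbT !mul0r !mulr0 addr0 add0r. Qed.

Definition leafpair_coef (t : btree n) (x y : 'I_n) : F :=
  if t is BNode (BLeaf a) (BLeaf b) then
    (x == a)%:R * (y == b)%:R - (x == b)%:R * (y == a)%:R
  else 0.

Lemma leafpair_coef_diag t x : leafpair_coef t x x = 0.
Proof. by case: t => [//|[a|? ?] [b|? ?]] //=; rewrite mulrC subrr. Qed.

Lemma leafpair_coefC t x y : leafpair_coef t y x = - leafpair_coef t x y.
Proof. by case: t => [//|[a|? ?] [b|? ?]] /=; rewrite ?oppr0 //; ring. Qed.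

Lemma leafpair_coef_eq0 t x y : size (leaves t) != 2 -> leafpair_coef t x y = 0.
Proof. by case: t => [//|[a|? ?] [b|? ?]]. Qed.

Lemma evalMinus2 t x y : evalMinus F t [:: x; y] = leafpair_coef t x y.
Proof.
have [/size_leaves2 [a [b ->]]|not2] := eqVneq (size (leaves t)) 2.
  by rewrite /= /tsub !tmul_tgen2.
by rewrite leafpair_coef_eq0 // (supported_on_size (@evalMinus_supported t)) // eq_sym.
Qed.

Lemma evalL2 t x y : evalL p t [:: x; y] = p y x * leafpair_coef t x y.
Proof.
have [/size_leaves2 [a [b ->]]|not2] := eqVneq (size (leaves t)) 2; last first.
  by rewrite leafpair_coef_eq0 // (supported_on_size (@evalL_supported t)) ?mulr0 // eq_sym.
have pba := pdeg_leaves (BLeaf b) (BLeaf a); have pab := pdeg_leaves (BLeaf a) (BLeaf b).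
rewrite /= in pba pab; rewrite /= /tsub /tscale pba pab !tmul_tgen2 !bichar11.
have on_indicator (c d : F) (P : bool) : (P -> c = d) -> c * P%:R = d * P%:R.
  by case: P => [->//|_]; rewrite !mulr0.
rewrite -!natrM !mulnb mulrBr.
by congr (_ - _); apply: on_indicator => /andP[/eqP -> /eqP ->].
Qed.

Lemma symmetrizer2 (f : tens F n) x y :
  symmetrizer p f [:: x; y] = f [:: x; y] + p y x * f [:: y; x].
Proof.
rewrite /symmetrizer /=; under eq_bigr do rewrite big_mkcond.
rewrite exchange_big sum_perm2 /=; congr (_ + _).
  have perm_word1 (v : 2.-tuple 'I_n) : perm_word 1%g v = v.
    by rewrite /perm_word invg1 -[RHS](map_tnth_enum v); apply: eq_map => k; rewrite perm1.
  rewrite (bigD1 [tuple x; y]) //= perm_word1 ifT; last exact/eqP.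
  rewrite big1 ?addr0 => [|v]; last by rewrite perm_word1 -val_eqE /= => /negPf ->.
  by rewrite /perm_coef big1 ?mul1r // => a _; rewrite big1 // => b; rewrite !perm1 => /andP[]; lia.
have word_swap (v : 2.-tuple 'I_n) : perm_word swap2 v = [:: tnth v (lift ord0 ord0); tnth v ord0].
  by rewrite /perm_word /swap2 tpermV !enum_ordSl enum_ord0 /= tpermL tpermR.
rewrite (bigD1 [tuple y; x]) //= word_swap !(tnth_nth x) /= ifT; last exact/eqP.
rewrite big1 ?addr0 => [|v]; last first.
  case: v / tupleP => a v; case: v / tupleP => b v.
  rewrite tuple0 word_swap !(tnth_nth a) /= => /eqP ne; case: eqP => // [[eb ea]].
  by case: ne; subst; apply: val_inj.
have coef_swap (v : 2.-tuple 'I_n) :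
    perm_coef p swap2 v = p (tnth v ord0) (tnth v (lift ord0 ord0)).
  rewrite /perm_coef !big_ord_recl big_ord0 mulr1 big_mkcond !big_ord_recl big_ord0 /=.
  rewrite [X in _ * X]big_mkcond !big_ord_recl big_ord0 /=.
  by rewrite /swap2 tpermL tpermR /= !mul1r !mulr1.
by rewrite coef_swap !(tnth_nth x).
Qed.

Lemma supported_on_tfinsupp f u : supported_on f u -> tfinsupp f.
Proof.
move=> supp_f; exists (permutations u) => w; rewrite mem_permutations.
by apply: contraNeq => /supp_f.
Qed.

Lemma psi_neq0_perm m u f l : supported_on f l -> psi m u f != 0 -> perm_eq l u.
Proof. by move=> supp_f; apply: contraNT => /(psi_supported_eq0 m supp_f) ->. Qed.

Section Span.
Variables (E : btree n -> tens F n) (coef2 : 'I_n -> 'I_n -> F).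
Hypothesis E_supported : forall t, supported_on (E t) (leaves t).
Hypothesis E_two_letters : forall t x y, E t [:: x; y] = coef2 x y * leafpair_coef t x y.
Hypothesis coef2_neq0 : forall x y, coef2 x y != 0.
Hypothesis E_psi :
  odd_symmetric -> forall t, uniq (leaves t) -> (tree_psi E t != 0) = admissible t.
Hypothesis two_neq0 : (2%:R : F) != 0.

Lemma tspan_nil g : tspan E g -> g [::] = 0.
Proof.
case=> k [ts [cs ->]]; rewrite big1 // => i _.
by rewrite (supported_on_size (@E_supported (ts i))) ?mulr0 // eq_sym -lt0n size_leaves_gt0.
Qed.

Lemma tspan2 g : tspan E g ->
  (forall i, g [:: i; i] = 0) /\
  (forall i j, coef2 i j * g [:: j; i] = - (coef2 j i * g [:: i; j])).
Proof.
case=> k [ts [cs gE]]; split=> [i|i j]; rewrite !gE.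
  by rewrite big1 // => l _; rewrite E_two_letters leafpair_coef_diag !mulr0.
rewrite mulr_sumr -mulrN -sumrN mulr_sumr; apply: eq_bigr => l _.
by rewrite !E_two_letters leafpair_coefC; ring.
Qed.

Lemma odd_symmetric_of_B : B_eq_F_oplus p E -> odd_symmetric.
Proof.
case=> decomp _.
have rep w : exists c g, tspan E g /\
    forall x, symmetrizer p (tsub (tdelta w) (tadd (tscale c (@tone F n)) g)) x = 0.
  have [c [g [span_g [_ sym]]]] := decomp _ (supported_on_tfinsupp (@tdelta_supported w)).
  by exists c, g.
split=> [i|i j neq_ij].
  have [c [g [/tspan2 [g_diag _] sym]]] := rep [:: i; i].
  move: (sym [:: i; i]); rewrite symmetrizer2 /tsub /tadd /tscale /tone /tdelta g_diag eqxx /=.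
  rewrite mulr0 !addr0 subr0 mulr1 => /eqP; rewrite addr_eq0 => /eqP e.
  by rewrite -[p i i]opprK -e.
have [c [g [/tspan2 [_ gC] sym]]] := rep [:: i; j].
move: (sym [:: i; j]) (sym [:: j; i]); rewrite !symmetrizer2 /tsub /tadd /tscale /tone /tdelta.
have ji_ij : ([:: j; i] == [:: i; j]) = false by rewrite eqseq_cons eq_sym (negPf neq_ij).
rewrite ji_ij eqxx /= !mulr0 !add0r.
move: (gC i j); set G := g [:: i; j]; set G' := g [:: j; i] => GC e1 e2.
(* [e1] and [e2] say [1 - G = p j i * G'] and [G' = p i j * (1 - G)]; if [G = 1]
   then [G' = 0], which [GC] forbids. *)
have : (1 - G) * (1 - p i j * p j i) = 0.
  transitivity ((1 - G + p j i * - G') - p j i * (- G' + p i j * (1 - G))); first by ring.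
  by rewrite e1 e2 mulr0 subr0.
move/eqP; rewrite mulf_eq0 !subr_eq0 => /orP[/eqP G1|/eqP/esym //].
move: e2 GC; rewrite -G1 subrr mulr0 addr0 => /eqP; rewrite oppr_eq0 => /eqP ->.
by move/eqP; rewrite mulr0 mulr1 eq_sym oppr_eq0 (negPf (coef2_neq0 _ _)).
Qed.

Section OddSymmetricSpan.
Hypothesis p_odd_sym : odd_symmetric.

Lemma ordering_condition_of_B : B_eq_F_oplus p E -> ordering_condition.
Proof.
case=> decomp _ m h m_ge2 h_decr; have h_inj := decreasing_inj h_decr.
set w := [seq h j | j <- enum 'I_m].
have uniq_w : uniq w by rewrite map_inj_uniq ?enum_uniq.
have w_neq0 : ~~ perm_eq [::] w.
  by apply: contraTN m_ge2 => /perm_size; rewrite size_map size_enum_ord => <-.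
have [c [g [[k [ts [cs gE]]] in_ideal]]] := decomp _ (supported_on_tfinsupp (@tdelta_supported w)).
have [_ /(_ w uniq_w)] := proj1 (nichols_idealE p_odd_sym _ two_neq0) in_ideal.
rewrite psiB psiD psiZ psi_tdelta (psi_supported_eq0 _ (@tdelta_supported [::]) w_neq0).
rewrite mulr0 add0r (eq_psi _ _ gE) psi_span => /eqP; rewrite subr_eq0 => /eqP inv_coef_w.
(* [psi] at [w] of [tdelta w = c + g] is nonzero, so some bracket of [g] has nonzero [psi]. *)
have [i psi_i] : exists i, psi (size w) w (E (ts i)) != 0.
  apply/existsP; apply: contraT => /existsPn psi0; move: (inv_coef_neq0 w).
  by rewrite inv_coef_w big1 ?eqxx // => i _; rewrite (eqP (negPn (psi0 i))) mulr0.
have perm_t := psi_neq0_perm (@E_supported (ts i)) psi_i.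
have adm_t : admissible (ts i).
  by rewrite -E_psi ?(perm_uniq perm_t) // /tree_psi (perm_size perm_t) (psi_perm _ _ perm_t).
have [o [perm_o comb_o]] := admissible_comb_exists adm_t.
apply/(ordering_comb_admissible p_odd_sym h_inj); exists o.
by split=> //; apply: perm_trans perm_o perm_t.
Qed.

Definition represented (f : tens F n) := exists c (l : seq (btree n * F)),
  nichols_ideal p (tsub f (tadd (tscale c (@tone F n)) (fun w => \sum_(x <- l) x.2 * E x.1 w))).

Lemma represented_ext f g : (forall w, f w = g w) -> represented f -> represented g.
Proof.
move=> eq_fg [c [l ideal]]; exists c, l.
by apply: nichols_ideal_ext ideal => w; rewrite /tsub eq_fg.
Qed.

Lemma representedD f g : represented f -> represented g -> represented (tadd f g).
Proof.
move=> [c1 [l1 ideal1]] [c2 [l2 ideal2]]; exists (c1 + c2), (l1 ++ l2).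
apply: nichols_ideal_ext (nichols_idealD ideal1 ideal2) => w.
by rewrite /tsub /tadd /tscale big_cat /=; ring.
Qed.

Lemma representedZ a f : represented f -> represented (tscale a f).
Proof.
move=> [c [l ideal]]; exists (a * c), [seq (x.1, a * x.2) | x <- l].
apply: nichols_ideal_ext (nichols_idealZ a ideal) => w.
rewrite /tsub /tadd /tscale big_map /= mulrBr mulrDr mulr_sumr mulrA.
by congr (_ - (_ + _)); apply: eq_bigr => x _; rewrite mulrA.
Qed.

Lemma nichols_ideal_supported f w : supported_on f w ->
  (uniq w -> psi (size w) w f = 0) -> nichols_ideal p f.
Proof.
move=> supp_f psi_f; apply/(nichols_idealE p_odd_sym _ two_neq0).
split=> [|u uniq_u]; first exact: supported_on_tfinsupp supp_f.
have [wu|not_wu] := boolP (perm_eq w u); last exact: psi_supported_eq0 supp_f not_wu.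
by rewrite -(perm_size wu) -(psi_perm _ _ wu) psi_f // (perm_uniq wu).
Qed.

Hypothesis ordering : ordering_condition.

Lemma represented_tdelta w : represented (tdelta w).
Proof.
have [->|w_neq0] := eqVneq w [::].
  exists 1, [::]; apply: nichols_ideal0 => x.
  by rewrite /tsub /tadd /tscale big_nil /tone; ring.
have [uniq_w|not_uniq_w] := boolP (uniq w); last first.
  exists 0, [::]; apply: nichols_ideal_ext (_ : nichols_ideal p (tdelta w)) => [x|].
    by rewrite /tsub /tadd /tscale big_nil; ring.
  by apply: nichols_ideal_supported (@tdelta_supported w) _ => /(negP not_uniq_w).
have [t [perm_t adm_t]] := admissible_tree_exists p_odd_sym ordering uniq_w w_neq0.
have psi_t : tree_psi E t != 0 by rewrite E_psi // (perm_uniq perm_t).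
exists 0, [:: (t, inv_coef w / tree_psi E t)].
have supp_t := supported_on_perm perm_t (@E_supported t).
apply: nichols_ideal_ext (_ : nichols_ideal p
   (tsub (tdelta w) (tscale (inv_coef w / tree_psi E t) (E t)))) => [x|].
  by rewrite /tsub /tadd /tscale big_seq1 /=; ring.
apply: nichols_ideal_supported (tsub_supported (@tdelta_supported w) (tscale_supported supp_t)) _.
move=> _; rewrite psiB psiZ psi_tdelta -(perm_size perm_t) -(psi_perm _ _ perm_t).
by rewrite -/(tree_psi E t) mulfVK ?subrr.
Qed.

Lemma represented_finsupp f : tfinsupp f -> represented f.
Proof.
case=> s supp_f.
have f_sum w : \sum_(x <- undup s) f x * tdelta x w = f w.
  have [ws|not_ws] := boolP (w \in s); last first.
    rewrite supp_f // big1_seq // => x /andP[_ xs]; rewrite /tdelta.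
    by case: eqP => [e|_]; [rewrite e -mem_undup xs in not_ws | rewrite mulr0].
  rewrite (bigD1_seq w) ?mem_undup ?undup_uniq //= /tdelta eqxx mulr1 big1 ?addr0 // => x xw.
  by rewrite eq_sym (negPf xw) mulr0.
apply: represented_ext f_sum _; elim: (undup s) => [|x r IH].
  by exists 0, [::]; apply: nichols_ideal0 => w; rewrite /tsub /tadd /tscale !big_nil; ring.
apply: represented_ext (representedD (representedZ (f x) (represented_tdelta x)) IH) => w.
by rewrite big_cons.
Qed.

Lemma B_of_ordering_condition : B_eq_F_oplus p E.
Proof.
split=> [f /represented_finsupp [c [l ideal]]|c g span_g].
  exists c, (fun w => \sum_(x <- l) x.2 * E x.1 w); split=> //.
  exists (size l), (fun i => (tnth (in_tuple l) i).1).
  by exists (fun i => (tnth (in_tuple l) i).2) => w; rewrite big_tnth.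
case/(nichols_idealE p_odd_sym _ two_neq0) => _ /(_ [::] isT).
by rewrite psi_nil /tsub /tscale /tone (tspan_nil span_g) /= mulr1 subr0.
Qed.

End OddSymmetricSpan.

Lemma B_eq_F_oplusE : B_eq_F_oplus p E <-> odd_symmetric /\ ordering_condition.
Proof.
split=> [B_E|[p_odd_sym ordering]]; last exact: B_of_ordering_condition.
have p_odd_sym := odd_symmetric_of_B B_E.
by split=> //; apply: ordering_condition_of_B.
Qed.

End Span.

Lemma B_evalMinusE : (2%:R : F) != 0 ->
  B_eq_F_oplus p (evalMinus F (n:=n)) <-> odd_symmetric /\ ordering_condition.
Proof.
move=> two_neq0; apply: (B_eq_F_oplusE (coef2 := fun _ _ => 1)) => //.
- exact: evalMinus_supported.
- by move=> t x y; rewrite evalMinus2 mul1r.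
- by move=> _ _; apply: oner_neq0.
- by move=> _ t _; apply: tree_psi_evalMinus_neq0.
Qed.

Lemma B_evalLE : (2%:R : F) != 0 ->
  B_eq_F_oplus p (evalL p) <-> odd_symmetric /\ ordering_condition.
Proof.
move=> two_neq0; apply: (B_eq_F_oplusE (coef2 := fun x y => p y x)) => //.
- exact: evalL_supported.
- exact: evalL2.
- by move=> p_odd_sym t; apply: tree_psi_evalL_neq0.
Qed.

End NicholsDiagonal.

Theorem proposition5p4 (F : fieldType) (n : nat) (p : 'I_n -> 'I_n -> F) :
  [pchar F] =i pred0 ->
  (forall i j, p i j != 0) ->
  (B_eq_F_oplus p (evalL p) <-> B_eq_F_oplus p (evalMinus F (n:=n))) /\
  (B_eq_F_oplus p (evalMinus F (n:=n)) <-> cond3 p).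
Proof.
move=> char0 p_neq0; have two_neq0 : (2%:R : F) != 0 by rewrite (pcharf0P F).1.
by rewrite cond3E (B_evalLE p_neq0 two_neq0) (B_evalMinusE p_neq0 two_neq0).
Qed.
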